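(* Suppose $f$ is $L_f$-smooth, $\mathbf{c}$ is $L_c$-smooth, and there exist $C,G>0$ such that for all $\mathbf{x}$: $\|\nabla f(\mathbf{x})\|\le G$, $\sup_{\mathbf{v}_h\in\partial h(\mathbf{x})}\|\mathbf{v}_h\|\le G$, $\sup_{\mathbf{v}_g\in\partial g(\mathbf{x})}\|\mathbf{v}_g\|\le G$, $\|\nabla\mathbf{c}(\mathbf{x})\|\le G$, $\|\mathbf{c}(\mathbf{x})\|\le C$; and the parameters satisfy $\mu_kL_{\rho_k}\le\frac14$, $\mu_{k+1}\le\mu_k$, $\rho_k\le\rho_{k+1}$, $0<\beta\le1$ for all $k\ge0$. Let $\underline\rho_K:=\min_{0\le k\le K-1}\rho_k$. Then for any $K\ge1$, $\frac1K\sum_{k=0}^{K-1}\|\nabla\mathbf{c}(\mathbf{x}^{k+1})\mathbf{c}(\mathbf{x}^{k+1})\|^2\le\frac{2}{\underline\rho_K^2K}\sum_{k=0}^{K-1}\|\mathbf{u}^{k+1}\|^2+\frac{18G^2}{\underline\rho_K^2}$. Moreover, if there exists $\delta>0$ such that $\|\nabla\mathbf{c}(\mathbf{x}^k)\mathbf{c}(\mathbf{x}^k)\|\ge\delta\|\mathbf{c}(\mathbf{x}^k)\|$ for all iterates $k\ge0$, then $\frac1K\sum_{k=0}^{K-1}\|\mathbf{c}(\mathbf{x}^{k+1})\|^2\le\frac{2}{\underline\rho_K^2\delta^2K}\sum_{k=0}^{K-1}\|\mathbf{u}^{k+1}\|^2+\frac{18G^2}{\delta^2\underline\rho_K^2}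$.
   Context: Problem: $\min f(\mathbf{x})+h(\mathbf{x})-g(\mathbf{x})$ s.t. $\mathbf{c}(\mathbf{x})=\mathbf{0}$, $f=\mathbb{E}_\xi[\mathbf{f}(\cdot,\xi)]$, $h,g$ proper closed convex; $\nabla\mathbf{c}(\mathbf{x})$ the transposed Jacobian. $Q_\rho(\mathbf{x})=f(\mathbf{x})+\frac{\rho}{2}\|\mathbf{c}(\mathbf{x})\|^2$, $L_\rho=\rho(\rho_0^{-1}L_f+G^2+CL_c)$. Iterates $(\mathbf{x}^k,\mathbf{z}^k)$ of MoSSP-P or MoSSP-R: $\mathbf{x}^{k+1}=\mathrm{prox}_{\mu_kh}(\mathbf{z}^k-\mu_k\mathbf{G}^k)$, $\mathbf{z}^{k+1}=\mathbf{z}^k-\beta(\mathrm{prox}_{\mu_kg}(\mathbf{z}^k)-\mathbf{x}^{k+1})$, with $\mathbf{G}^k$ the momentum estimator ($\mathbf{S}^k$ or $\mathbf{D}^k$) of $\nabla Q_{\rho_k}(\mathbf{x}^k)$; $\mathbf{u}^{k+1}:=\nabla Q_{\rho_k}(\mathbf{x}^{k+1})-\mathbf{G}^k+\mu_k^{-1}(\mathrm{prox}_{\mu_kg}(\mathbf{z}^k)-\mathbf{x}^{k+1})\in\nabla Q_{\rho_k}(\mathbf{x}^{k+1})+\partial h(\mathbf{x}^{k+1})-\partial g(\mathrm{prox}_{\mu_kg}(\mathbf{z}^k))$. *)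

From HB Require Import structures.
From mathcomp Require Import all_boot all_order all_algebra.
From mathcomp Require Import reals constructive_ereal.
Set Implicit Arguments. Unset Strict Implicit. Unset Printing Implicit Defensive.
Import Order.TTheory GRing.Theory Num.Theory.
Local Open Scope ring_scope.

Section Defs.
Variable R : realType.

Definition dotv n (u v : 'rV[R]_n) : R := \sum_(i < n) u ord0 i * v ord0 i.
Definition enorm n (v : 'rV[R]_n) : R := Num.sqrt (\sum_(i < n) (v ord0 i) ^+ 2).

(* Operator (spectral) norm bound: ||A|| <= G for A : R^m -> R^n, where
   A is represented by right multiplication of row vectors w |-> w *m M. *)
Definition opnorm_le m n (M : 'M[R]_(m, n)) (G : R) : Prop :=
  forall w : 'rV[R]_m, enorm (w *m M) <= G * enorm w.

Definition is_gradient n (f : 'rV[R]_n -> R) (gf : 'rV[R]_n -> 'rV[R]_n) : Prop :=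
  forall x (eps : R), 0 < eps -> exists2 delta : R, 0 < delta &
    forall h, enorm h < delta ->
      `|f (x + h) - f x - dotv (gf x) h| <= eps * enorm h.

(* J x : 'M_(m,n) is the Jacobian of c : R^n -> R^m at x (J_{ij} = d c_i / d x_j);
   the transposed Jacobian grad c(x) acts on w : R^m as w *m J x. *)
Definition is_jacobian n m (c : 'rV[R]_n -> 'rV[R]_m) (J : 'rV[R]_n -> 'M[R]_(m, n)) : Prop :=
  forall x (eps : R), 0 < eps -> exists2 delta : R, 0 < delta &
    forall h, enorm h < delta ->
      enorm (c (x + h) - c x - h *m (J x)^T) <= eps * enorm h.

Definition L_smooth n (f : 'rV[R]_n -> R) (gf : 'rV[R]_n -> 'rV[R]_n) (L : R) : Prop :=
  is_gradient f gf /\ forall x y, enorm (gf x - gf y) <= L * enorm (x - y).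

Definition L_smooth_map n m (c : 'rV[R]_n -> 'rV[R]_m) (J : 'rV[R]_n -> 'M[R]_(m, n))
  (L : R) : Prop :=
  is_jacobian c J /\ forall x y, opnorm_le (J x - J y) (L * enorm (x - y)).

Definition proper_fun n (h : 'rV[R]_n -> \bar R) : Prop :=
  (exists x, h x < +oo)%E /\ (forall x, -oo < h x)%E.

Definition closed_fun n (h : 'rV[R]_n -> \bar R) : Prop :=
  forall x (a : R), (a%:E < h x)%E -> exists2 delta : R, 0 < delta &
    forall y, enorm (y - x) < delta -> (a%:E < h y)%E.

Definition convex_fun n (h : 'rV[R]_n -> \bar R) : Prop :=
  forall x y (t : R), 0 <= t <= 1 ->
    (h (t *: x + (1 - t) *: y)%R <= t%:E * h x + (1 - t)%:E * h y)%E.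

Definition pcc n (h : 'rV[R]_n -> \bar R) : Prop :=
  [/\ proper_fun h, closed_fun h & convex_fun h].

Definition subgrad n (h : 'rV[R]_n -> \bar R) (x v : 'rV[R]_n) : Prop :=
  h x \is a fin_num /\ forall y, (h x + (dotv v (y - x)%R)%:E <= h y)%E.

Definition is_prox n (mu : R) (h : 'rV[R]_n -> \bar R) (y p : 'rV[R]_n) : Prop :=
  forall x, (h p + ((2 * mu)^-1 * enorm (p - y)%R ^+ 2)%:E
             <= h x + ((2 * mu)^-1 * enorm (x - y)%R ^+ 2)%:E)%E.

(* grad Q_rho(x) = grad f(x) + rho * grad c(x) c(x),  Q_rho = f + rho/2 ||c||^2 *)
Definition gradQ n m (gf : 'rV[R]_n -> 'rV[R]_n) (c : 'rV[R]_n -> 'rV[R]_m)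
  (J : 'rV[R]_n -> 'M[R]_(m, n)) (rho : R) (x : 'rV[R]_n) : 'rV[R]_n :=
  gf x + rho *: (c x *m J x).

Definition Lrho (rho0 Lf G C Lc rho : R) : R := rho * (rho0^-1 * Lf + G ^+ 2 + C * Lc).

(* u^{k+1} = grad Q_{rho_k}(x^{k+1}) - G^k + mu_k^{-1}(prox_{mu_k g}(z^k) - x^{k+1}),
   where w k = prox_{mu_k g}(z^k). *)
Definition uvec n m (gf : 'rV[R]_n -> 'rV[R]_n) (c : 'rV[R]_n -> 'rV[R]_m)
  (J : 'rV[R]_n -> 'M[R]_(m, n)) (rho mu : nat -> R) (x w Gk : nat -> 'rV[R]_n)
  (k : nat) : 'rV[R]_n :=
  gradQ gf c J (rho k) (x k.+1) - Gk k + (mu k)^-1 *: (w k - x k.+1).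

Definition rho_min (rho : nat -> R) (K : nat) : R :=
  \big[Num.min/rho 0%N]_(k < K) rho k.

End Defs.

From HB Require Import structures.
From mathcomp Require Import all_boot all_order all_algebra.
From mathcomp Require Import reals constructive_ereal.
From mathcomp Require Import ring lra.
Import Order.TTheory GRing.Theory Num.Theory.
Set Implicit Arguments. Unset Strict Implicit.
Local Open Scope ring_scope.

(* The two prox steps give first-order conditions: [(z^k - mu_k G^k - x^{k+1}) / mu_k]
   is a subgradient of [h] at [x^{k+1}] and [(z^k - w^k) / mu_k] is a subgradient
   of [g] at [w^k = prox_{mu_k g}(z^k)].  Substituted into the definition of
   [u^{k+1}], they write [rho_k grad c(x^{k+1}) c(x^{k+1})] as [u^{k+1}] minus
   [grad f(x^{k+1})] minus the first subgradient plus the second, three vectors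
   of norm at most [G].  Hence
   [rho_k^2 ||grad c c||^2 <= 2 ||u^{k+1}||^2 + 2 * 3 * 3 G^2], and averaging over
   [k] with [rho_k >= underline rho_K] gives the first bound; the second follows
   from [||grad c c|| >= delta ||c||]. *)

Section EuclideanNorm.
Variables (R : realType) (n : nat).
Implicit Types (a b v : 'rV[R]_n) (k : R).

Lemma enorm_ge0 v : 0 <= enorm v.
Proof. exact: sqrtr_ge0. Qed.

Lemma sqr_enorm v : enorm v ^+ 2 = \sum_(i < n) v ord0 i ^+ 2.
Proof. by rewrite /enorm sqr_sqrtr // sumr_ge0 // => i _; apply: sqr_ge0. Qed.

Lemma sqr_enorm_le v (G : R) : enorm v <= G -> enorm v ^+ 2 <= G ^+ 2.
Proof. by move=> vG; rewrite ler_sqr ?nnegrE ?(le_trans (enorm_ge0 v)). Qed.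

Lemma enormN v : enorm (- v) = enorm v.
Proof. by rewrite /enorm; congr Num.sqrt; apply: eq_bigr => i _; rewrite mxE sqrrN. Qed.

Lemma sqr_enormZ k v : enorm (k *: v) ^+ 2 = k ^+ 2 * enorm v ^+ 2.
Proof. by rewrite !sqr_enorm mulr_sumr; apply: eq_bigr => i _; rewrite mxE exprMn. Qed.

Lemma sqr_enormD a b :
  enorm (a + b) ^+ 2 = enorm a ^+ 2 + 2 * dotv a b + enorm b ^+ 2.
Proof.
rewrite !sqr_enorm /dotv mulr_sumr -!big_split /=.
by apply: eq_bigr => i _; rewrite mxE; ring.
Qed.

Lemma sqr_enormD_le a b :
  enorm (a + b) ^+ 2 <= 2 * (enorm a ^+ 2 + enorm b ^+ 2).
Proof.
rewrite !sqr_enorm -big_split mulr_sumr /=; apply: ler_sum => i _.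
by rewrite mxE; have := sqr_ge0 (a ord0 i - b ord0 i); nra.
Qed.

Lemma sqr_enormD3_le a b v :
  enorm (a + b + v) ^+ 2 <= 3 * (enorm a ^+ 2 + enorm b ^+ 2 + enorm v ^+ 2).
Proof.
rewrite !sqr_enorm -!big_split mulr_sumr /=; apply: ler_sum => i _.
rewrite !mxE; set x := a ord0 i; set y := b ord0 i; set z := v ord0 i.
by have := sqr_ge0 (x - y); have := sqr_ge0 (x - z); have := sqr_ge0 (y - z); nra.
Qed.

Lemma dotvZl k a b : dotv (k *: a) b = k * dotv a b.
Proof. by rewrite /dotv mulr_sumr; apply: eq_bigr => i _; rewrite mxE mulrA. Qed.

Lemma dotvZr k a b : dotv a (k *: b) = k * dotv a b.
Proof. by rewrite /dotv mulr_sumr; apply: eq_bigr => i _; rewrite mxE mulrCA. Qed.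

Lemma dotvNl a b : dotv (- a) b = - dotv a b.
Proof. by rewrite /dotv -sumrN; apply: eq_bigr => i _; rewrite mxE mulNr. Qed.

End EuclideanNorm.

Section Prox.
Variable R : realType.

Lemma le_of_forall_small_slack (a b W : R) :
  0 <= W -> (forall t, 0 < t <= 1 -> a <= b + t * W) -> a <= b.
Proof.
move=> W0 slack; apply/ler_addgt0Pr => e e0.
have W1 : 0 < W + 1 by lra.
pose t := Num.min 1 (e / (W + 1)).
have t0 : 0 < t by rewrite lt_min ltr01 divr_gt0.
have t1 : t <= 1 by rewrite ge_min lexx.
apply: le_trans (slack t _) _; first by rewrite t0 t1.
rewrite lerD2l; apply: le_trans (_ : e / (W + 1) * W <= e).
  by rewrite ler_wpM2r // ge_min lexx orbT.
by rewrite mulrAC ler_pdivrMr // ler_wpM2l ?(ltW e0) //; lra.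
Qed.

Variable n : nat.
Implicit Types (h : 'rV[R]_n -> \bar R) (y p : 'rV[R]_n).

Lemma prox_fin_num (mu : R) h y p :
  proper_fun h -> is_prox mu h y p -> h p \is a fin_num.
Proof.
move=> [[x0 hx0] hninf] hp; apply/fin_numPlt; rewrite hninf /=.
have := hp x0; case: (h p) => [r _| | _]; [exact: ltry | | by []].
rewrite addye // leye_eq; move: hx0; case: (h x0) => //.
Qed.

(* The optimality condition of the prox problem: the convex combination
   [t y' + (1 - t) p] competes with [p], and [t -> 0] leaves only the
   first-order term. *)
Lemma prox_subgrad (mu : R) h y p :
  0 < mu -> pcc h -> is_prox mu h y p -> subgrad h p (mu^-1 *: (y - p)).
Proof.
move=> mu0 [hproper _ hconv] hp.
have hpfin := prox_fin_num hproper hp.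
split=> // y'; rewrite -(fineK hpfin); set r := fine (h p).
case hy': (h y') => [s| |]; last 2 first.
- by rewrite leey.
- by have := hproper.2 y'; rewrite hy'.
rewrite -EFinD lee_fin; set d := y' - p.
pose W := (2 * mu)^-1 * enorm d ^+ 2.
apply: (le_of_forall_small_slack (W := W)) => [|t /andP[t0 t1]].
  by rewrite mulr_ge0 ?sqr_ge0 // invr_ge0 mulr_ge0 // ltW.
have t01 : 0 <= t <= 1 by rewrite (ltW t0) t1.
pose q := t *: y' + (1 - t) *: p.
have hqy : q - y = (p - y) + t *: d.
  by apply/matrixP => i j; rewrite !mxE; ring.
have hq := le_trans (hp q) (leeD2r _ (hconv y' p t t01)).
rewrite -/q hy' -(fineK hpfin) -/r -!EFinM -!EFinD lee_fin in hq.
rewrite hqy (sqr_enormD (p - y)) dotvZr sqr_enormZ in hq.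
rewrite dotvZl -opprB dotvNl.
set D := dotv (p - y) d in hq *.
have : t * (r - mu^-1 * D - s - t * W) <= 0.
  have inv_mu : mu^-1 = 2 * (2 * mu)^-1.
    by rewrite invfM mulrA divff ?mul1r // pnatr_eq0.
  by rewrite /W inv_mu; lra.
by rewrite pmulr_rle0 // mulrN; lra.
Qed.

End Prox.

Lemma mean_le_of_bound (R : realFieldType) (K : nat) (a b : 'I_K -> R)
    (r alpha B : R) :
  (0 < K)%N -> 0 < r -> (forall k, r * a k <= alpha * b k + B) ->
  K%:R^-1 * \sum_(k < K) a k
    <= alpha / (r * K%:R) * \sum_(k < K) b k + B / r.
Proof.
move=> K0 r0 bound; have K0' : 0 < K%:R :> R by rewrite ltr0n.
have sum_bound : r * \sum_(k < K) a k <= alpha * \sum_(k < K) b k + K%:R * B.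
  have -> : K%:R * B = \sum_(k < K) B by rewrite sumr_const card_ord mulr_natl.
  by rewrite !mulr_sumr -big_split; apply: ler_sum => k _.
have -> : alpha / (r * K%:R) * \sum_(k < K) b k + B / r
          = (alpha * \sum_(k < K) b k + K%:R * B) / (r * K%:R).
  by field; rewrite !gt_eqF.
rewrite ler_pdivlMr ?mulr_gt0 //.
suff -> : K%:R^-1 * (\sum_(k < K) a k) * (r * K%:R) = r * \sum_(k < K) a k by [].
by field; rewrite gt_eqF.
Qed.

Section PenaltyGradient.
Variables (R : realType) (n m : nat).
Variables (gf : 'rV[R]_n -> 'rV[R]_n) (c : 'rV[R]_n -> 'rV[R]_m).
Variables (J : 'rV[R]_n -> 'M[R]_(m, n)) (h g : 'rV[R]_n -> \bar R) (G : R).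
Hypotheses (hpcc : pcc h) (gpcc : pcc g).
Hypotheses (hG : forall y v, subgrad h y v -> enorm v <= G)
           (gG : forall y v, subgrad g y v -> enorm v <= G).

Lemma sqr_penalty_grad_le (mu rho : R) (p z w Gk : 'rV[R]_n) :
  0 < mu -> enorm (gf p) <= G ->
  is_prox mu h (z - mu *: Gk) p -> is_prox mu g z w ->
  (rho * enorm (c p *m J p)) ^+ 2
    <= 2 * enorm (gradQ gf c J rho p - Gk + mu^-1 *: (w - p)) ^+ 2
       + 18 * G ^+ 2.
Proof.
move=> mu0 gfG hprox gprox.
set vh := mu^-1 *: (z - mu *: Gk - p); set vg := mu^-1 *: (z - w).
have vhG : enorm vh <= G := hG (prox_subgrad mu0 hpcc hprox).
have vgG : enorm vg <= G := gG (prox_subgrad mu0 gpcc gprox).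
have decomp : rho *: (c p *m J p)
    = (gradQ gf c J rho p - Gk + mu^-1 *: (w - p)) + (- gf p - vh + vg).
  by apply/matrixP => i j; rewrite !mxE; field; rewrite gt_eqF.
rewrite exprMn -sqr_enormZ decomp; apply: le_trans (sqr_enormD_le _ _) _.
have := sqr_enormD3_le (- gf p) (- vh) vg; rewrite !enormN.
have := sqr_enorm_le gfG; have := sqr_enorm_le vhG; have := sqr_enorm_le vgG.
lra.
Qed.

End PenaltyGradient.

Theorem lemmaC4 (R : realType) (n m : nat)
  (f : 'rV[R]_n -> R) (gf : 'rV[R]_n -> 'rV[R]_n)
  (c : 'rV[R]_n -> 'rV[R]_m) (J : 'rV[R]_n -> 'M[R]_(m, n))
  (h g : 'rV[R]_n -> \bar R)
  (Lf Lc C G beta : R) (mu rho : nat -> R)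
  (x z w Gk : nat -> 'rV[R]_n) :
  pcc h -> pcc g ->
  L_smooth f gf Lf -> L_smooth_map c J Lc ->
  0 < C -> 0 < G ->
  (forall y, enorm (gf y) <= G) ->
  (forall y v, subgrad h y v -> enorm v <= G) ->
  (forall y v, subgrad g y v -> enorm v <= G) ->
  (forall y, opnorm_le (J y)^T G) ->
  (forall y, enorm (c y) <= C) ->
  (forall k, 0 < mu k) -> (forall k, 0 < rho k) ->
  (forall k, mu k * Lrho (rho 0%N) Lf G C Lc (rho k) <= 4^-1) ->
  (forall k, mu k.+1 <= mu k) ->
  (forall k, rho k <= rho k.+1) ->
  0 < beta <= 1 ->
  (* MoSSP iterates *)
  (forall k, is_prox (mu k) h (z k - mu k *: Gk k) (x k.+1)) ->
  (forall k, is_prox (mu k) g (z k) (w k)) ->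
  (forall k, z k.+1 = z k - beta *: (w k - x k.+1)) ->
  forall K : nat, (0 < K)%N ->
  let rK := rho_min rho K in
  let u := uvec gf c J rho mu x w Gk in
  (K%:R^-1 * \sum_(k < K) enorm (c (x k.+1) *m J (x k.+1)) ^+ 2
     <= 2 / (rK ^+ 2 * K%:R) * \sum_(k < K) enorm (u k) ^+ 2
        + 18 * G ^+ 2 / rK ^+ 2)
  /\
  (forall delta : R, 0 < delta ->
     (forall k, enorm (c (x k) *m J (x k)) >= delta * enorm (c (x k))) ->
     K%:R^-1 * \sum_(k < K) enorm (c (x k.+1)) ^+ 2
       <= 2 / (rK ^+ 2 * delta ^+ 2 * K%:R) * \sum_(k < K) enorm (u k) ^+ 2
          + 18 * G ^+ 2 / (delta ^+ 2 * rK ^+ 2)).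
Proof.
move=> hpcc gpcc _ _ _ _ gfG hG gG _ _ mu0 rho0 _ _ _ _ hprox gprox _ K K0 rK u.
have rK0 : 0 < rK by apply: lt_bigmin => // k _.
have step (k : 'I_K) :
    rK ^+ 2 * enorm (c (x k.+1) *m J (x k.+1)) ^+ 2
      <= 2 * enorm (u k) ^+ 2 + 18 * G ^+ 2.
  apply: le_trans _ (sqr_penalty_grad_le c J hpcc gpcc hG gG (rho k) (mu0 k)
                     (gfG _) (hprox k) (gprox k)).
  rewrite exprMn ler_wpM2r ?sqr_ge0 // ler_sqr ?nnegrE ?(ltW rK0) ?(ltW (rho0 k)) //.
  exact: bigmin_le.
split; first by apply: mean_le_of_bound; rewrite ?exprn_gt0.
move=> delta delta0 cJ_ge; rewrite [delta ^+ 2 * _]mulrC.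
apply: mean_le_of_bound => [//||k]; first by rewrite mulr_gt0 ?exprn_gt0.
apply: le_trans _ (step k); rewrite -mulrA ler_wpM2l ?sqr_ge0 // -exprMn.
by rewrite ler_sqr ?nnegrE ?mulr_ge0 ?enorm_ge0 ?(ltW delta0).
Qed.
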